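(* Let $p$ be a prime, $k, r \geq 1$, $G_1, \dots, G_k$ finite-dimensional vector spaces over $\mathbb{F}_p$, $G^{\oplus} = G_1 \oplus \cdots \oplus G_k$ with each $G_i$ regarded as a subspace of $G^{\oplus}$, and $f \colon G^{\oplus} \to \mathbb{D}$. Let $\xi > 0$ and let $\psi \colon (G^{\oplus})^{r-1} \times G_1 \times \cdots \times G_k \to \mathbb{F}_p$ be a multilinear form such that \[\mathbb{E}_{a^{(1)}, \dots, a^{(r-1)} \in G^{\oplus},\ d_1 \in G_1, \dots, d_k \in G_k,\ x \in G^{\oplus}}\ \partial_{a^{(1)}} \cdots \partial_{a^{(r-1)}} \partial_{d_1} \cdots \partial_{d_k} f(x)\, \omega^{\psi(a^{(1)}, \dots, a^{(r-1)}, d_1, \dots, d_k)} \geq \xi,\] where $d_i \in G_i$ is viewed in $G^{\oplus}$. Let $i < j$ be elements of $[r-1]$ and define the multilinear form $\psi_{ij} \colon (G^{\oplus})^{r-1} \times G_1 \times \cdots \times G_k \to \mathbb{F}_p$ by $\psi_{ij}(a^{(1)}, \dots, a^{(r-1)}, d_1, \dots, d_k) = \psi(a^{(1)}, \dots, a^{(r-1)}, d_1, \dots, d_k) - \psi(\tilde a^{(1)}, \dots, \tilde a^{(r-1)}, d_1, \dots, d_k)$, where $(\tilde a^{(1)}, \dots, \tilde a^{(r-1)})$ is obtained from $(a^{(1)}, \dots, a^{(r-1)})$ by swapping $a^{(i)}$ and $a^{(j)}$. Then $\operatorname{bias} \psi_{ij} \geq \xi^8$.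
   Context: $\mathbb{D} = \{z \in \mathbb{C} : |z| \leq 1\}$, $\omega = e^{2\pi i/p}$, $\mathbb{E}$ is the uniform average, $\partial_u f(x) = f(x+u)\overline{f(x)}$. For a multilinear form $\alpha$ on a product $V_1 \times \cdots \times V_s$ of $\mathbb{F}_p$-vector spaces, $\operatorname{bias}\alpha = \mathbb{E}_{v_1 \in V_1, \dots, v_s \in V_s} \omega^{\alpha(v_1, \dots, v_s)}$. *)

From mathcomp Require Import all_boot all_algebra all_fingroup.
From mathcomp Require Import complex.
From mathcomp Require Import reals trigo.
Set Implicit Arguments.
Unset Strict Implicit.
Unset Printing Implicit Defensive.
Import GRing.Theory Num.Theory.
Local Open Scope ring_scope.
Local Open Scope complex_scope.

(* Model: G_i = F_p^(n i) (every finite-dim F_p-space is of this form up to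
   isomorphism); G^(+) = F_p^T with T = {i : 'I_k & 'I_(n i)} the disjoint
   union of the coordinate sets, and G_i is the subspace of G^(+) of vectors
   supported on the i-th block. *)

Notation Gsum p n := ({ffun {i : _ & 'I_(n i)} -> 'F_p}) (only parsing).

Definition Gsub (p k : nat) (n : 'I_k -> nat) (i : 'I_k) : {set Gsum p n} :=
  [set x : Gsum p n | [forall t, (tag t != i) ==> (x t == 0)]].

Definition Dset (p k : nat) (n : 'I_k -> nat) : {set {ffun 'I_k -> Gsum p n}} :=
  [set d : {ffun 'I_k -> Gsum p n} | [forall l, d l \in Gsub p n l]].

Definition omega (R : realType) (p : nat) : R[i] :=
  (cos (2 * pi / p%:R)) +i* (sin (2 * pi / p%:R)).

Definition omega_pow (R : realType) (p : nat) (x : 'F_p) : R[i] :=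
  omega R p ^+ (val x).

Definition mderiv (R : realType) (V : zmodType) (f : V -> R[i]) (u : V) : V -> R[i] :=
  fun x => f (x + u) * (f x)^*.

Definition iter_mderiv (R : realType) (V : zmodType) (f : V -> R[i]) (s : seq V)
  : V -> R[i] := foldr (fun u g => mderiv g u) f s.

Definition scalev (p : nat) (T : finType) (c : 'F_p) (x : {ffun T -> 'F_p})
  : {ffun T -> 'F_p} := [ffun t => c * x t].

Definition upd (I : finType) (V : Type) (a : {ffun I -> V}) (j : I) (x : V)
  : {ffun I -> V} := [ffun m => if m == j then x else a m].

(* psi : (G^(+))^(r-1) x G_1 x ... x G_k -> F_p is multilinear
   (its values outside the domain, i.e. for d not in Dset, are irrelevant) *)
Definition multilinear_form (p k m : nat) (n : 'I_k -> nat)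
  (psi : {ffun 'I_m -> Gsum p n} -> {ffun 'I_k -> Gsum p n} -> 'F_p) : Prop :=
  (forall (j : 'I_m) a d (c : 'F_p) (x y : Gsum p n),
      d \in Dset p n ->
      psi (upd a j (scalev c x + y)) d = c * psi (upd a j x) d + psi (upd a j y) d)
  /\
  (forall (j : 'I_k) a d (c : 'F_p) (x y : Gsum p n),
      d \in Dset p n -> x \in Gsub p n j -> y \in Gsub p n j ->
      psi a (upd d j (scalev c x + y)) = c * psi a (upd d j x) + psi a (upd d j y)).

Definition corr_avg (R : realType) (p k m : nat) (n : 'I_k -> nat)
  (f : Gsum p n -> R[i])
  (psi : {ffun 'I_m -> Gsum p n} -> {ffun 'I_k -> Gsum p n} -> 'F_p) : R[i] :=
  (\sum_(a : {ffun 'I_m -> Gsum p n}) \sum_(d in Dset p n) \sum_(x : Gsum p n)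
      iter_mderiv f (codom a ++ codom d) x * omega_pow R (psi a d))
  / (#|{: {ffun 'I_m -> Gsum p n}}| * #|Dset p n| * #|{: Gsum p n}|)%:R.

Definition bias (R : realType) (p k m : nat) (n : 'I_k -> nat)
  (phi : {ffun 'I_m -> Gsum p n} -> {ffun 'I_k -> Gsum p n} -> 'F_p) : R[i] :=
  (\sum_(a : {ffun 'I_m -> Gsum p n}) \sum_(d in Dset p n) omega_pow R (phi a d))
  / (#|{: {ffun 'I_m -> Gsum p n}}| * #|Dset p n|)%:R.

Definition psi_swap (p k m : nat) (n : 'I_k -> nat)
  (psi : {ffun 'I_m -> Gsum p n} -> {ffun 'I_k -> Gsum p n} -> 'F_p) (i j : 'I_m)
  : {ffun 'I_m -> Gsum p n} -> {ffun 'I_k -> Gsum p n} -> 'F_p :=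
  fun a d => psi a d - psi [ffun l => a (tperm i j l)] d.

From HB Require Import structures.
From mathcomp Require Import all_boot all_order all_algebra all_fingroup.
From mathcomp Require Import complex.
From mathcomp Require Import reals trigo.
From mathcomp Require Import ring.
From mathcomp Require boolp.
Import Order.TTheory GRing.Theory Num.Theory.
Local Open Scope ring_scope.
Local Open Scope complex_scope.

Set Implicit Arguments.
Unset Strict Implicit.
Unset Printing Implicit Defensive.

(* Freeze every coordinate except a^(i), a^(j) and d.  What remains of the
   correlation is sum_{u,v,x} d_u d_v g(x) omega^{B(u,v)}, where g (the other
   derivatives of f) is bounded by 1 and B is bilinear.  Substituting
   y = x + u, z = x + v and applying Cauchy-Schwarz twice bounds its square by
   |V|^4 sum_{u,v} omega^{B(u,v) - B(v,u)}, and for each h the inner sum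
   sum_u omega^{B(u,h) - B(h,u)} is a character sum, hence non-negative.
   Averaging over the frozen coordinates, again with Cauchy-Schwarz, gives
   |corr|^2 <= bias psi_ij, so bias psi_ij >= xi^2 >= xi^8 (as bias <= 1). *)

Section RootOfUnity.
Variables (R : realType) (p : nat).
Local Notation e := (@omega_pow R p).

Lemma expr_cos_sin (t : R) (m : nat) :
  (cos t +i* sin t) ^+ m = cos (m%:R * t) +i* sin (m%:R * t).
Proof.
elim: m => [|m IH]; first by rewrite expr0 mul0r cos0 sin0.
rewrite exprS IH -[m.+1]addn1 natrD mulrDl mul1r (addrC _ t) cosD sinD.
by congr (_ +i* _); rewrite addrC.
Qed.

Lemma norm_omega : `|omega R p| = 1.
Proof. by rewrite normc_def /= cos2Dsin2 sqrtr1. Qed.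

Lemma norm_omega_pow a : `|e a| = 1.
Proof. by rewrite normrX norm_omega expr1n. Qed.

Hypothesis p_prime : prime p.

Lemma omega_p : omega R p ^+ p = 1.
Proof.
have p_neq0 : p%:R != 0 :> R by rewrite pnatr_eq0 -lt0n prime_gt0.
have two_pi : p%:R * (2 * pi / p%:R) = pi *+ 2 :> R by rewrite mulrC divfK // mulr_natl.
by rewrite expr_cos_sin two_pi cos2pi sin2pi.
Qed.

Lemma omega_powD a b : e (a + b) = e a * e b.
Proof.
rewrite /omega_pow -exprD.
have -> : val (a + b) = ((val a + val b) %% p)%N by rewrite /=; congr modn; exact: Fp_cast.
by rewrite [in RHS](divn_eq (val a + val b) p) exprD mulnC exprM omega_p expr1n mul1r.
Qed.

Lemma omega_powB a b : e (a - b) = e a * (e b)^*.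
Proof.
have e_unit : e b * (e b)^* = 1 by rewrite -normCK norm_omega_pow expr1n.
have e_opp : e b * e (- b) = 1 by rewrite -omega_powD subrr.
by rewrite omega_powD -[e (- b)]mul1r -e_unit mulrAC e_opp mul1r.
Qed.

End RootOfUnity.

Section CauchySchwarz.
Variables (C : numDomainType) (I : finType) (P : pred I).

Lemma sqr_sum_le (G : I -> C) : (forall i, G i \is Num.real) ->
  (\sum_(i | P i) G i) ^+ 2 <= #|P|%:R * \sum_(i | P i) G i ^+ 2.
Proof.
move=> G_real.
set s := \sum_(i | P i) G i; set q := \sum_(i | P i) G i ^+ 2.
have sum_sqr_diff : \sum_(i | P i) \sum_(j | P j) (G i - G j) ^+ 2
    = (#|P|%:R * q - s ^+ 2) *+ 2.
  transitivity (\sum_(i | P i) \sum_(j | P j) (G i ^+ 2 + G j ^+ 2 - (G i * G j) *+ 2)).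
    by apply: eq_bigr => i _; apply: eq_bigr => j _; rewrite sqrrB addrAC mulr2n.
  under eq_bigr => i _ do rewrite sumrB big_split /= sumr_const sumrMnl -mulr_sumr.
  rewrite sumrB big_split /= sumr_const sumrMnl.
  by rewrite sumrMnl -mulr_suml -/s -/q -mulr_natl; ring.
have : 0 <= (#|P|%:R * q - s ^+ 2) *+ 2.
  rewrite -sum_sqr_diff; apply: sumr_ge0 => i _; apply: sumr_ge0 => j _.
  by rewrite -realEsqr realB.
by rewrite pmulrn_lge0 // subr_ge0.
Qed.

Lemma sqr_norm_sum_le (F : I -> C) :
  `|\sum_(i | P i) F i| ^+ 2 <= #|P|%:R * \sum_(i | P i) `|F i| ^+ 2.
Proof.
apply: le_trans (sqr_sum_le (fun i => normr_real (F i))).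
by rewrite ler_pXn2r ?nnegrE ?sumr_ge0 // ler_norm_sum.
Qed.

End CauchySchwarz.

Lemma sqr_norm_sum2_le (C : numDomainType) (I J : finType) (P : pred I) (Q : pred J)
    (F : I -> J -> C) :
  `|\sum_(i | P i) \sum_(j | Q j) F i j| ^+ 2
    <= (#|P| * #|Q|)%N%:R * \sum_(i | P i) \sum_(j | Q j) `|F i j| ^+ 2.
Proof.
apply: le_trans (sqr_norm_sum_le P (fun i => \sum_(j | Q j) F i j)) _.
rewrite natrM -mulrA ler_wpM2l // mulr_sumr ler_sum // => i _.
exact: sqr_norm_sum_le.
Qed.

Section Translation.
Variables (V : finZmodType) (C : nmodType) (F : V -> C).

Lemma sum_shift c : \sum_x F (x + c) = \sum_x F x.
Proof. by rewrite [RHS](reindex_inj (addIr c)). Qed.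

Lemma sum_reflect c : \sum_x F (c - x) = \sum_x F x.
Proof. by rewrite [RHS](reindex_inj (inv_inj (subKr c))). Qed.

End Translation.

Section Update.
Variable I : finType.
Implicit Types (T : Type) (i j : I).

Lemma upd_id T (a : {ffun I -> T}) i u : upd a i u i = u.
Proof. by rewrite ffunE eqxx. Qed.

Lemma upd_upd T (a : {ffun I -> T}) i u v : upd (upd a i u) i v = upd a i v.
Proof. by apply/ffunP => l; rewrite !ffunE; case: eqP. Qed.

Lemma upd_comm T (a : {ffun I -> T}) i j u v :
  i != j -> upd (upd a i u) j v = upd (upd a j v) i u.
Proof.
move=> ij; apply/ffunP => l; rewrite !ffunE.
by case: (eqVneq l j) => [->|//]; rewrite eq_sym (negbTE ij).
Qed.

Lemma upd_tperm T (a : {ffun I -> T}) i j u v : i != j ->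
  [ffun l => upd (upd a i u) j v (tperm i j l)] = upd (upd a i v) j u.
Proof.
move=> ij; apply/ffunP => l; rewrite !ffunE.
by case: tpermP => [->|->|/eqP/negbTE-> /eqP/negbTE->]; rewrite ?(negbTE ij) ?eqxx.
Qed.

Lemma sum_upd (V : finType) (C : nmodType) (F : {ffun I -> V} -> C) i :
  \sum_a \sum_u F (upd a i u) = (\sum_a F a) *+ #|V|.
Proof.
pose flip (au : {ffun I -> V} * V) := (upd au.1 i au.2, au.1 i).
have flipK : involutive flip.
  case=> a u; rewrite /flip /= upd_upd upd_id; congr pair.
  by apply/ffunP => l; rewrite ffunE; case: eqP => [->|].
transitivity (\sum_(au : {ffun I -> V} * V) F au.1).
  by rewrite pair_bigA [RHS](reindex_inj (inv_inj flipK)).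
rewrite -(pair_bigA _ (fun a _ => F a)) -sumrMnl.
by apply: eq_bigr => a _; rewrite sumr_const.
Qed.

Lemma sum_upd2 (V : finType) (C : nmodType) (F : {ffun I -> V} -> C) i j :
  \sum_a \sum_u \sum_v F (upd (upd a i u) j v) = (\sum_a F a) *+ #|V| ^ 2.
Proof.
by rewrite (sum_upd (fun b => \sum_v F (upd b j v))) sum_upd -mulrnA.
Qed.

Lemma perm_codom_upd2 (S : eqType) (a : {ffun I -> S}) i j u v : i != j ->
  perm_eq (codom (upd (upd a i u) j v))
          (u :: v :: [seq a l | l <- enum I & (l != i) && (l != j)]).
Proof.
move=> ij; set b := upd (upd a i u) j v.
have -> : u :: v :: [seq a l | l <- enum I & (l != i) && (l != j)]
    = map b (i :: j :: [seq l <- enum I | (l != i) && (l != j)]).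
  rewrite /= /b !ffunE (negbTE ij) !eqxx; congr [:: _, _ & _].
  apply/eq_in_map => l; rewrite mem_filter => /andP[/andP[li lj] _].
  by rewrite !ffunE (negbTE li) (negbTE lj).
rewrite codomE; apply/perm_map/uniq_perm; first exact: enum_uniq.
  by rewrite /= filter_uniq ?enum_uniq // !inE !mem_filter (negbTE ij) !eqxx !andbF.
move=> l; rewrite mem_enum !inE mem_filter mem_enum andbT.
by case: (l == i); case: (l == j).
Qed.

End Update.

Lemma foldr_perm (T : eqType) (U : Type) (F : T -> U -> U) (z : U) :
  (forall a b y, F a (F b y) = F b (F a y)) ->
  forall s t, perm_eq s t -> foldr F z s = foldr F z t.
Proof.
move=> FC.
have F_foldr a y s : F a (foldr F y s) = foldr F (F a y) s.
  by elim: s => //= b s <-; exact: FC.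
have foldrC y s1 s2 : foldr F (foldr F y s2) s1 = foldr F (foldr F y s1) s2.
  by elim: s1 => //= a s1 ->; rewrite F_foldr.
by apply: catCA_perm_subst => s1 s2 s3; rewrite !foldr_cat foldrC.
Qed.

Section MultiplicativeDerivative.
Variables (R : realType) (V : zmodType).
Implicit Types (g : V -> R[i]) (u v x : V).

Lemma norm_mderiv_le1 g u x :
  (forall y, `|g y| <= 1) -> `|mderiv g u x| <= 1.
Proof. by move=> g_le1; rewrite normrM norm_conjC mulr_ile1 ?normr_ge0. Qed.

Lemma norm_iter_mderiv_le1 g s x :
  (forall y, `|g y| <= 1) -> `|iter_mderiv g s x| <= 1.
Proof.
move=> g_le1; elim: s x => [|u s IH] x //=.
exact: norm_mderiv_le1.
Qed.

Lemma mderiv2E g u v x :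
  mderiv (mderiv g v) u x = g (x + u + v) * (g (x + u))^* * (g (x + v))^* * g x.
Proof. by rewrite /mderiv rmorphM /= conjCK; ring. Qed.

Lemma mderivC g u v : mderiv (mderiv g u) v = mderiv (mderiv g v) u.
Proof. by apply: boolp.funext => x; rewrite !mderiv2E (addrAC x v u); ring. Qed.

Lemma iter_mderiv_perm g s t : perm_eq s t -> iter_mderiv g s = iter_mderiv g t.
Proof. by apply: foldr_perm => a b h /=; exact: mderivC. Qed.

End MultiplicativeDerivative.

Section CharacterSum.
Variables (R : realType) (p : nat) (V : finZmodType).
Hypothesis p_prime : prime p.
Local Notation e := (@omega_pow R p).

Lemma sum_omega_pow_ge0 (L : V -> 'F_p) :
  (forall a b, L (a + b) = L a + L b) -> 0 <= \sum_z e (L z).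
Proof.
move=> LD; set S := \sum_z e (L z).
have [e_L1|/forallPn[z1 e_Lz1]] := boolP [forall z, e (L z) == 1].
  by rewrite /S (eq_bigr (fun=> 1)) ?sumr_ge0 // => z _; apply/eqP; move/forallP: e_L1.
have S_fixed : S * e (L z1) = S.
  by rewrite -[RHS](sum_shift _ z1) mulr_suml; apply: eq_bigr => z _; rewrite LD omega_powD.
have : S * (e (L z1) - 1) = 0 by rewrite mulrBr mulr1 S_fixed subrr.
by move/eqP; rewrite mulf_eq0 subr_eq0 (negbTE e_Lz1) orbF => /eqP ->.
Qed.

End CharacterSum.

Section BilinearCorrelation.
Variables (R : realType) (p : nat) (V : finZmodType).
Hypothesis p_prime : prime p.
Local Notation e := (@omega_pow R p).
Variables (g : V -> R[i]) (B : V -> V -> 'F_p).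
Hypothesis g_le1 : forall x, `|g x| <= 1.
Hypothesis BDl : forall u u' v, B (u + u') v = B u v + B u' v.
Hypothesis BDr : forall u v v', B u (v + v') = B u v + B u v'.

Lemma BBl u u' v : B (u - u') v = B u v - B u' v.
Proof. by apply/eqP; rewrite eq_sym subr_eq -BDl subrK. Qed.

Lemma BBr u v v' : B u (v - v') = B u v - B u v'.
Proof. by apply/eqP; rewrite eq_sym subr_eq -BDr subrK. Qed.

Definition twisted_conv y z := \sum_x g (y + z - x) * g x * e (B (y - x) (z - x)).

Lemma mderiv2_corrE :
  \sum_u \sum_v \sum_x mderiv (mderiv g v) u x * e (B u v)
  = \sum_y \sum_z (g y)^* * (g z)^* * twisted_conv y z.
Proof.
transitivity (\sum_x \sum_y \sum_z
    (g y)^* * (g z)^* * (g (y + z - x) * g x * e (B (y - x) (z - x)))).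
  under eq_bigr do rewrite exchange_big; rewrite exchange_big.
  apply: eq_bigr => x _; rewrite -(sum_shift _ (- x)); apply: eq_bigr => y _.
  rewrite -(sum_shift _ (- x)); apply: eq_bigr => z _.
  rewrite mderiv2E (addrC x (y - x)) subrK (addrC x (z - x)) subrK addrA.
  ring.
rewrite exchange_big; apply: eq_bigr => y _.
by rewrite exchange_big; apply: eq_bigr => z _; rewrite mulr_sumr.
Qed.

Definition alt_sum h := \sum_z e (B z h - B h z).

Lemma alt_sum_ge0 h : 0 <= alt_sum h.
Proof.
apply: (sum_omega_pow_ge0 _ p_prime) => a b.
by rewrite BDl BDr addrACA opprD.
Qed.

Definition conv_weight w x x' := g (w - x) * g x * (g (w - x'))^* * (g x')^* *
  e (B w x' - B w x + B x x - B x' x').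

Lemma norm_conv_weight_le1 w x x' : `|conv_weight w x x'| <= 1.
Proof.
rewrite !normrM !norm_conjC norm_omega_pow mulr1.
by rewrite !mulr_ile1 ?mulr_ge0 ?normr_ge0.
Qed.

Lemma sum_sqr_twisted_convE :
  \sum_y \sum_z `|twisted_conv y z| ^+ 2
  = \sum_w \sum_x \sum_x' conv_weight w x x' * alt_sum (x - x').
Proof.
transitivity (\sum_y \sum_z \sum_x \sum_x'
   g (y + z - x) * g x * (g (y + z - x'))^* * (g x')^* *
   e (B (y - x) (z - x) - B (y - x') (z - x'))).
  apply: eq_bigr => y _; apply: eq_bigr => z _.
  rewrite normCK rmorph_sum /= mulr_suml; apply: eq_bigr => x _.
  rewrite mulr_sumr; apply: eq_bigr => x' _.
  by rewrite !rmorphM /= omega_powB //; ring.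
transitivity (\sum_z \sum_w \sum_x \sum_x'
   g (w - z + z - x) * g x * (g (w - z + z - x'))^* * (g x')^* *
   e (B (w - z - x) (z - x) - B (w - z - x') (z - x'))).
  by rewrite exchange_big; apply: eq_bigr => z _; rewrite -(sum_shift _ (- z)).
rewrite exchange_big; apply: eq_bigr => w _.
rewrite exchange_big; apply: eq_bigr => x _.
rewrite exchange_big; apply: eq_bigr => x' _.
rewrite /alt_sum mulr_sumr; apply: eq_bigr => z _.
rewrite !subrK /conv_weight -[RHS]mulrA -omega_powD //.
by congr (_ * e _); rewrite !BBl !BBr; ring.
Qed.

Lemma sum_sqr_twisted_conv_le :
  \sum_y \sum_z `|twisted_conv y z| ^+ 2 <= #|V|%:R ^+ 2 * \sum_h alt_sum h.
Proof.
have sqr_ge0 : 0 <= \sum_y \sum_z `|twisted_conv y z| ^+ 2.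
  by rewrite sumr_ge0 // => y _; rewrite sumr_ge0 // => z _; rewrite exprn_ge0.
rewrite -(ger0_norm sqr_ge0) sum_sqr_twisted_convE.
apply: le_trans (ler_norm_sum _ _ _) _.
apply: (@le_trans _ _ (\sum_(w : V) \sum_(x : V) \sum_(x' : V) alt_sum (x - x'))).
  apply: ler_sum => w _; apply: le_trans (ler_norm_sum _ _ _) _.
  apply: ler_sum => x _; apply: le_trans (ler_norm_sum _ _ _) _.
  apply: ler_sum => x' _; rewrite normrM (ger0_norm (alt_sum_ge0 _)).
  by rewrite ler_piMl ?alt_sum_ge0 ?norm_conv_weight_le1.
have sum_alt_sum :
    \sum_(x : V) \sum_(x' : V) alt_sum (x - x') = #|V|%:R * \sum_h alt_sum h.
  rewrite (eq_bigr (fun=> \sum_h alt_sum h)) ?sumr_const ?mulr_natl // => x _.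
  exact: sum_reflect.
by rewrite sumr_const sum_alt_sum -[X in X <= _]mulr_natl mulrA -expr2.
Qed.

Lemma sqr_norm_mderiv2_corr_le :
  `|\sum_u \sum_v \sum_x mderiv (mderiv g v) u x * e (B u v)| ^+ 2
   <= #|V|%:R ^+ 4 * \sum_u \sum_v e (B u v - B v u).
Proof.
rewrite mderiv2_corrE; apply: le_trans (sqr_norm_sum2_le _ _ _) _.
have -> : \sum_u \sum_v e (B u v - B v u) = \sum_h alt_sum h by rewrite exchange_big.
have -> : (#|(xpredT : pred V)| * #|(xpredT : pred V)|)%N%:R = #|V|%:R ^+ 2 :> R[i].
  by rewrite natrM expr2.
rewrite (_ : 4 = 2 + 2)%N // exprD -mulrA ler_wpM2l ?exprn_ge0 ?ler0n //.
apply: le_trans sum_sqr_twisted_conv_le; apply: ler_sum => y _; apply: ler_sum => z _.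
rewrite ler_pXn2r ?nnegrE // !normrM !norm_conjC ler_piMl //.
by rewrite mulr_ile1.
Qed.

End BilinearCorrelation.

Lemma Dset0 (p k : nat) (n : 'I_k -> nat) : 0 \in Dset p n.
Proof.
by rewrite inE; apply/forallP => l; rewrite inE; apply/forallP => t; rewrite !ffunE implybT.
Qed.

HB.instance Definition _ (aT : finType) (rT : finZmodType) :=
  GRing.Zmodule.on {ffun aT -> rT}.

Section SwapCorrelation.
Variables (R : realType) (p k m : nat) (n : 'I_k -> nat).
Hypothesis p_prime : prime p.
Local Notation V := (Gsum p n).
Local Notation A := {ffun 'I_m -> V}.
Local Notation D := {ffun 'I_k -> V}.
Local Notation e := (@omega_pow R p).
Variables (f : V -> R[i]) (psi : A -> D -> 'F_p).
Hypothesis f_le1 : forall x, `|f x| <= 1.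
Hypothesis psi_multilinear : multilinear_form psi.
Variables (i j : 'I_m).
Hypothesis i_neq_j : i != j.

Lemma psiD l (a : A) (d : D) (x y : V) : d \in Dset p n ->
  psi (upd a l (x + y)) d = psi (upd a l x) d + psi (upd a l y) d.
Proof.
have scalev1 : scalev 1 x = x by apply/ffunP => t; rewrite ffunE mul1r.
by move=> dD; rewrite -{1}scalev1 psi_multilinear.1 // mul1r.
Qed.

Definition corr_slice (a : A) (d : D) := \sum_u \sum_v \sum_x
  iter_mderiv f (codom (upd (upd a i u) j v) ++ codom d) x
  * e (psi (upd (upd a i u) j v) d).

Lemma sqr_norm_corr_slice_le a d : d \in Dset p n ->
  `|corr_slice a d| ^+ 2
    <= #|V|%:R ^+ 4 * \sum_u \sum_v e (psi_swap psi i j (upd (upd a i u) j v) d).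
Proof.
move=> dD.
set others := [seq a l | l <- enum 'I_m & (l != i) && (l != j)].
pose G := iter_mderiv f (others ++ codom d).
pose B u v := psi (upd (upd a i u) j v) d.
have BDl u u' v : B (u + u') v = B u v + B u' v.
  by rewrite /B !(upd_comm _ _ _ i_neq_j) psiD.
have BDr u v v' : B u (v + v') = B u v + B u v' by rewrite /B psiD.
have -> : corr_slice a d = \sum_u \sum_v \sum_x mderiv (mderiv G v) u x * e (B u v).
  apply: eq_bigr => u _; apply: eq_bigr => v _; apply: eq_bigr => x _.
  rewrite (@iter_mderiv_perm _ _ _ _ (u :: v :: others ++ codom d)) //.
  by rewrite -cat_cons -cat_cons perm_cat2r perm_codom_upd2.
apply: le_trans (sqr_norm_mderiv2_corr_le p_prime (g := G) _ BDl BDr) _.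
  by move=> x; exact: norm_iter_mderiv_le1.
rewrite ler_wpM2l ?exprn_ge0 ?ler0n // le_eqVlt; apply/orP; left; apply/eqP.
by apply: eq_bigr => u _; apply: eq_bigr => v _; rewrite /psi_swap upd_tperm.
Qed.

Definition corr_sum := \sum_(a : A) \sum_(d in Dset p n) \sum_x
  iter_mderiv f (codom a ++ codom d) x * e (psi a d).

Definition swap_sum := \sum_(a : A) \sum_(d in Dset p n) e (psi_swap psi i j a d).

Lemma sum_corr_slice :
  \sum_(a : A) \sum_(d in Dset p n) corr_slice a d = corr_sum *+ #|V| ^ 2.
Proof.
rewrite /corr_sum exchange_big [in RHS]exchange_big -sumrMnl.
by apply: eq_bigr => d _; exact: sum_upd2.
Qed.

Lemma sum_swap_slice : \sum_(a : A) \sum_(d in Dset p n)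
    \sum_u \sum_v e (psi_swap psi i j (upd (upd a i u) j v) d) = swap_sum *+ #|V| ^ 2.
Proof.
rewrite /swap_sum exchange_big [in RHS]exchange_big -sumrMnl.
by apply: eq_bigr => d _; exact: (sum_upd2 (fun a => e (psi_swap psi i j a d))).
Qed.

Lemma sqr_norm_corr_sum_le :
  `|corr_sum| ^+ 2 <= (#|{: A}| * #|Dset p n|)%N%:R * #|V|%:R ^+ 2 * swap_sum.
Proof.
have NV4_gt0 : 0 < #|V|%:R ^+ 4 :> R[i].
  by rewrite exprn_gt0 // ltr0n; apply/card_gt0P; exists 0.
rewrite -(ler_pM2r NV4_gt0).
have -> : `|corr_sum| ^+ 2 * #|V|%:R ^+ 4 = `|corr_sum *+ #|V| ^ 2| ^+ 2.
  by rewrite -[corr_sum *+ _]mulr_natr normrM normr_nat exprMn natrX -exprM.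
rewrite -sum_corr_slice; apply: le_trans (sqr_norm_sum2_le _ _ _) _.
have -> : (#|{: A}| * #|Dset p n|)%N%:R * #|V|%:R ^+ 2 * swap_sum * #|V|%:R ^+ 4
    = (#|{: A}| * #|Dset p n|)%N%:R * (#|V|%:R ^+ 4 * (swap_sum *+ #|V| ^ 2)).
  by rewrite -[swap_sum *+ _]mulr_natr natrX; ring.
rewrite ler_wpM2l ?ler0n // -sum_swap_slice mulr_sumr ler_sum // => a _.
by rewrite mulr_sumr ler_sum // => d dD; exact: sqr_norm_corr_slice_le.
Qed.

Lemma sqr_norm_corr_avg_le_bias : `|corr_avg f psi| ^+ 2 <= bias R (psi_swap psi i j).
Proof.
have NA_gt0 : (0 < #|{: A}|)%N by apply/card_gt0P; exists 0.
have ND_gt0 : (0 < #|Dset p n|)%N by apply/card_gt0P; exists 0; exact: Dset0.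
have NV_gt0 : (0 < #|V|)%N by apply/card_gt0P; exists 0.
rewrite /corr_avg /bias -/corr_sum -/swap_sum normrM normfV normr_nat exprMn exprVn.
rewrite ler_pdivrMr ?exprn_gt0 ?ltr0n ?muln_gt0 ?NA_gt0 ?ND_gt0 ?NV_gt0 //.
apply: le_trans sqr_norm_corr_sum_le _; rewrite le_eqVlt; apply/orP; left; apply/eqP.
by rewrite !natrM; field; rewrite !pnatr_eq0 -!lt0n NA_gt0 ND_gt0.
Qed.

End SwapCorrelation.

Lemma norm_bias_le1 (R : realType) (p k m : nat) (n : 'I_k -> nat)
    (phi : {ffun 'I_m -> Gsum p n} -> {ffun 'I_k -> Gsum p n} -> 'F_p) :
  `|bias R phi| <= 1.
Proof.
have NA_gt0 : (0 < #|{: {ffun 'I_m -> Gsum p n}}|)%N by apply/card_gt0P; exists 0.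
have ND_gt0 : (0 < #|Dset p n|)%N by apply/card_gt0P; exists 0; exact: Dset0.
rewrite normrM normfV normr_nat ler_pdivrMr ?ltr0n ?muln_gt0 ?NA_gt0 // mul1r.
apply: le_trans (ler_norm_sum _ _ _) _.
apply: (@le_trans _ _ (\sum_(a : {ffun 'I_m -> Gsum p n}) \sum_(d in Dset p n) 1)).
  apply: ler_sum => a _; apply: le_trans (ler_norm_sum _ _ _) _.
  by apply: ler_sum => d _; rewrite norm_omega_pow.
by rewrite !sumr_const -mulrnA mulnC.
Qed.

Theorem proposition27 (R : realType) (p k r : nat) (n : 'I_k -> nat)
  (hp : prime p) (hk : (1 <= k)%N) (hr : (1 <= r)%N)
  (f : Gsum p n -> R[i]) (hf : forall x, `|f x| <= 1)
  (xi : R) (hxi : 0 < xi)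
  (psi : {ffun 'I_r.-1 -> Gsum p n} -> {ffun 'I_k -> Gsum p n} -> 'F_p)
  (hpsi : multilinear_form psi)
  (hcorr : xi%:C <= corr_avg f psi)
  (i j : 'I_r.-1) (hij : (i < j)%N) :
  (xi ^+ 8)%:C <= bias R (psi_swap psi i j).
Proof.
have i_neq_j : i != j by rewrite neq_ltn hij.
have xi_gt0 : 0 < xi%:C :> R[i] by rewrite ltcR.
have xi2_le_bias : (xi ^+ 2)%:C <= bias R (psi_swap psi i j).
  apply: le_trans (sqr_norm_corr_avg_le_bias hp hf hpsi i_neq_j).
  rewrite rmorphXn /= ler_pXn2r ?nnegrE ?normr_ge0 ?(ltW xi_gt0) //.
  by rewrite ger0_norm // (le_trans (ltW xi_gt0) hcorr).
have bias_le1 : bias R (psi_swap psi i j) <= 1.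
  apply: le_trans (real_ler_norm _) (norm_bias_le1 _ _).
  by rewrite ger0_real // (le_trans _ xi2_le_bias) // lecR exprn_ge0 // ltW.
have xi_le1 : xi <= 1.
  have := le_trans xi2_le_bias bias_le1.
  by rewrite (_ : 1 = 1%:C) // lecR expr_le1 // ltW.
apply: le_trans xi2_le_bias; rewrite lecR.
exact: ler_wiXn2l (ltW hxi) xi_le1 _ _ _.
Qed.
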